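(* Let $\mathcal C$ be a class of groups with invariant $\Lambda$-valued pseudo-norms which is closed under taking subgroups (with restricted pseudo-norm) and under isomorphism. Let $G$ be a finitely presented group and $\ell$ an invariant $\Lambda$-valued pseudo-norm on $G$. If $(G,\ell)$ is metrically LE$\mathcal C$, then $(G,\ell)$ is fully residually $\mathcal C$: for every finite $D\subseteq G$ and finite $Q\subseteq\Lambda\cap\mathbb Q$ with $0\in Q$ there are $(C,\ell_C)\in\mathcal C$ and a group homomorphism $\varphi:G\to C$ which is a $D$-$Q$-almost-homomorphism.
   Context: $\Lambda$ is a closed convex subset of $[0,\infty)$ containing $0$. A pseudo-norm on $G$ is $\ell:G\to\Lambda$ with $\ell(1)=0$, $\ell(g)=\ell(g^{-1})$, $\ell(gh)\le\ell(g)+\ell(h)$; invariant if $\ell(h^{-1}gh)=\ell(g)$. For pseudo-normed $(G_1,\ell_1),(G_2,\ell_2)$, finite $D\subseteq G_1$ and finite $Q\subseteq\Lambda\cap\mathbb Q$ with $0\in Q$, $\varphi:G_1\to G_2$ is a $D$-$Q$-almost-homomorphism if injective on $D$, $\varphi(hg)=\varphi(h)\varphi(g)$ whenever $h,g,hg\in D$, and $\ell_1(g)\,\square\,q\iff\ell_2(\varphi(g))\,\square\,q$ for all $g\in D,q\in Q,\square\in\{<,=,>\}$. $(G,\ell)$ is metrically LE$\mathcal C$ if for all such $D,Q$ there are $(C,\ell_C)\in\mathcal C$ and a $D$-$Q$-almost-homomorphism $G\to C$. *)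

From HB Require Import structures.
From mathcomp Require Import all_boot all_order all_algebra.
From mathcomp Require Import all_classical all_reals topology normedtype.
From Stdlib Require List.
Set Implicit Arguments. Unset Strict Implicit. Unset Printing Implicit Defensive.
Import Order.TTheory GRing.Theory Num.Theory.
Import numFieldNormedType.Exports.
Local Open Scope ring_scope.

Record group := Group {
  gcar :> Type;
  gmul : gcar -> gcar -> gcar;
  ginv : gcar -> gcar;
  gone : gcar;
  gmulA : forall x y z, gmul x (gmul y z) = gmul (gmul x y) z;
  gmul1 : forall x, gmul gone x = x;
  gmulV : forall x, gmul (ginv x) x = gone
}.

Definition is_hom (G H : group) (f : G -> H) : Prop :=
  forall x y, f (gmul x y) = gmul (f x) (f y).

Record pngroup (R : realType) := PNGroup {
  pgrp : group;
  pnorm : pgrp -> R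
}.

Definition good_Lambda (R : realType) (Lam : set R) : Prop :=
  closed Lam /\ (forall x, Lam x -> 0 <= x) /\ Lam 0 /\
  (forall x y t, Lam x -> Lam y -> 0 <= t <= 1 -> Lam (t * x + (1 - t) * y)).

Definition inv_pseudo_norm (R : realType) (Lam : set R) (X : pngroup R) : Prop :=
  let l := @pnorm R X in
  (forall g, Lam (l g)) /\
  l (gone (pgrp X)) = 0 /\
  (forall g, l g = l (ginv g)) /\
  (forall g h, l (gmul g h) <= l g + l h) /\
  (forall g h, l (gmul (ginv h) (gmul g h)) = l g).

Definition subgroup_pred (G : group) (P : G -> Prop) : Prop :=
  P (gone G) /\ (forall x y, P x -> P y -> P (gmul x y)) /\ (forall x, P x -> P (ginv x)).

Section SubGroup.
Variables (G : group) (P : G -> Prop) (HP : subgroup_pred P).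

Definition sub_car := {x : G | P x}.
Definition sub_mul (x y : sub_car) : sub_car :=
  exist _ (gmul (proj1_sig x) (proj1_sig y))
    ((proj1 (proj2 HP)) _ _ (proj2_sig x) (proj2_sig y)).
Definition sub_inv (x : sub_car) : sub_car :=
  exist _ (ginv (proj1_sig x)) ((proj2 (proj2 HP)) _ (proj2_sig x)).
Definition sub_one : sub_car := exist _ (gone G) (proj1 HP).

Lemma sub_eq (x y : sub_car) : proj1_sig x = proj1_sig y -> x = y.
Proof.
case: x => a pa; case: y => b pb /= e; subst b.
by rewrite (Prop_irrelevance pa pb).
Qed.

Lemma sub_mulA x y z : sub_mul x (sub_mul y z) = sub_mul (sub_mul x y) z.
Proof. by apply: sub_eq; rewrite /= gmulA. Qed.
Lemma sub_mul1 x : sub_mul sub_one x = x.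
Proof. by apply: sub_eq; rewrite /= gmul1. Qed.
Lemma sub_mulV x : sub_mul (sub_inv x) x = sub_one.
Proof. by apply: sub_eq; rewrite /= gmulV. Qed.

Definition subgroup : group :=
  @Group sub_car sub_mul sub_inv sub_one sub_mulA sub_mul1 sub_mulV.
End SubGroup.

Definition sub_pngroup (R : realType) (X : pngroup R) (P : pgrp X -> Prop)
  (HP : subgroup_pred P) : pngroup R :=
  @PNGroup R (subgroup HP) (fun x => pnorm (proj1_sig x)).

Definition closed_subgroups (R : realType) (C : pngroup R -> Prop) : Prop :=
  forall (X : pngroup R) (P : pgrp X -> Prop) (HP : subgroup_pred P),
    C X -> C (sub_pngroup HP).

Definition closed_iso (R : realType) (C : pngroup R -> Prop) : Prop :=
  forall (X Y : pngroup R) (f : pgrp X -> pgrp Y),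
    is_hom f -> bijective f -> (forall x, pnorm (f x) = pnorm x) ->
    C X -> C Y.

Definition almost_hom (R : realType) (X Y : pngroup R) (D : seq (pgrp X))
  (Q : seq rat) (f : pgrp X -> pgrp Y) : Prop :=
  (forall g h, List.In g D -> List.In h D -> f g = f h -> g = h) /\
  (forall h g, List.In h D -> List.In g D -> List.In (gmul h g) D ->
     f (gmul h g) = gmul (f h) (f g)) /\
  (forall g q, List.In g D -> q \in Q ->
     [/\ (pnorm g < ratr q <-> pnorm (f g) < ratr q),
         (pnorm g = ratr q <-> pnorm (f g) = ratr q) &
         (pnorm g > ratr q <-> pnorm (f g) > ratr q)]).

Definition admissible_Q (R : realType) (Lam : set R) (Q : seq rat) : Prop :=
  0%R \in Q /\ (forall q, q \in Q -> Lam (ratr q)).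

Definition metrically_LE (R : realType) (Lam : set R) (C : pngroup R -> Prop)
  (G : pngroup R) : Prop :=
  forall (D : seq (pgrp G)) (Q : seq rat), admissible_Q Lam Q ->
    exists (X : pngroup R) (f : pgrp G -> pgrp X), C X /\ almost_hom D Q f.

Definition fully_residually (R : realType) (Lam : set R) (C : pngroup R -> Prop)
  (G : pngroup R) : Prop :=
  forall (D : seq (pgrp G)) (Q : seq rat), admissible_Q Lam Q ->
    exists (X : pngroup R) (f : pgrp G -> pgrp X),
      C X /\ is_hom f /\ almost_hom D Q f.

(** Words in the letters x_i^{±1}, i < n: (i, false) = x_i, (i, true) = x_i^{-1}. *)
Definition word (n : nat) := seq ('I_n * bool).

Definition letter_inv n (a : 'I_n * bool) : 'I_n * bool := (a.1, ~~ a.2).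

(** The congruence on words generated by free cancellation and relators r = 1:
    words modulo [wcong rels] form the group <x_1..x_n | rels>. *)
Inductive wcong (n : nat) (rels : seq (word n)) : word n -> word n -> Prop :=
| wc_refl w : wcong rels w w
| wc_sym u v : wcong rels u v -> wcong rels v u
| wc_trans u v w : wcong rels u v -> wcong rels v w -> wcong rels u w
| wc_cat u u' v v' : wcong rels u u' -> wcong rels v v' -> wcong rels (u ++ v) (u' ++ v')
| wc_cancel a : wcong rels [:: a; letter_inv a] [::]
| wc_rel r : r \in rels -> wcong rels r [::].

Definition eval_letter (G : group) n (gens : 'I_n -> G) (a : 'I_n * bool) : G :=
  if a.2 then ginv (gens a.1) else gens a.1.

Definition eval_word (G : group) n (gens : 'I_n -> G) (w : word n) : G :=
  foldr (fun a acc => gmul (eval_letter gens a) acc) (gone G) w.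

(** G is finitely presented: there are finitely many generators and finitely
    many relators such that the natural evaluation map from
    <x_1..x_n | rels> onto G is an isomorphism (surjective, with kernel exactly
    the words congruent to the empty word). *)
Definition finitely_presented (G : group) : Prop :=
  exists (n : nat) (gens : 'I_n -> G) (rels : seq (word n)),
    (forall x : G, exists w : word n, eval_word gens w = x) /\
    (forall w : word n, eval_word gens w = gone G <-> wcong rels w [::]).

(* A D'-Q-almost-homomorphism f into a group of the class, for D' containing D
   together with the values of all suffixes of words spelling the elements of D
   and of the relators, is multiplicative on every step of the evaluation of
   those words.
   Hence the images of the generators satisfy the relators, so they define a
   homomorphism on the finitely presented group, and it agrees with f on D. *)
From mathcomp Require Import all_boot all_order all_algebra.
From mathcomp Require Import all_classical all_reals topology normedtype.
From Stdlib Require List.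
Set Implicit Arguments. Unset Strict Implicit. Unset Printing Implicit Defensive.

Section GroupTheory.
Variable H : group.
Implicit Types x y z : H.

Lemma gmulrV x : gmul x (ginv x) = gone H.
Proof.
set y := ginv x.
rewrite -[gmul x y]gmul1 -(gmulV y) -gmulA (gmulA y x y).
by rewrite /y gmulV gmul1 gmulV.
Qed.

Lemma gmulr1 x : gmul x (gone H) = x.
Proof. by rewrite -(gmulV x) gmulA gmulrV gmul1. Qed.

Lemma gmulI x y z : gmul x y = gmul x z -> y = z.
Proof. by move=> e; rewrite -(gmul1 y) -(gmulV x) -gmulA e gmulA gmulV gmul1. Qed.

Lemma ginv_unique x y : gmul x y = gone H -> x = ginv y.
Proof. by move=> e; rewrite -(gmulr1 x) -(gmulrV y) gmulA e gmul1. Qed.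

Lemma ginvK x : ginv (ginv x) = x.
Proof. by apply/esym/ginv_unique; rewrite gmulrV. Qed.

Lemma ginvM x y : ginv (gmul x y) = gmul (ginv y) (ginv x).
Proof.
apply/esym/ginv_unique.
by rewrite -gmulA (gmulA (ginv x)) gmulV gmul1 gmulV.
Qed.

Lemma gmulV_eq1 x y : gmul x (ginv y) = gone H -> x = y.
Proof. by move/ginv_unique; rewrite ginvK. Qed.

End GroupTheory.

Section PartialHomomorphisms.
Variables (G H : group) (S : G -> Prop) (f : G -> H).
Hypothesis f_mul_on : forall x y, S x -> S y -> S (gmul x y) ->
  f (gmul x y) = gmul (f x) (f y).

Lemma hom_on_one : S (gone G) -> f (gone G) = gone H.
Proof.
move=> S1; apply: (@gmulI _ (f (gone G))).
by rewrite -f_mul_on ?gmul1 ?gmulr1.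
Qed.

Lemma hom_on_inv x : S (gone G) -> S x -> S (ginv x) -> f (ginv x) = ginv (f x).
Proof.
move=> S1 Sx Sx'; apply: ginv_unique.
by rewrite -f_mul_on ?gmulV // hom_on_one.
Qed.

End PartialHomomorphisms.

Section Words.
Variables (n : nat) (H : group).
Implicit Types (w : word n) (y : 'I_n -> H).

Lemma eval_word_cat y u v :
  eval_word y (u ++ v) = gmul (eval_word y u) (eval_word y v).
Proof. by elim: u => [|a u IH] /=; rewrite ?gmul1 // IH gmulA. Qed.

Definition winv w : word n := rev (map (@letter_inv n) w).

Lemma eval_word_winv y w : eval_word y (winv w) = ginv (eval_word y w).
Proof.
elim: w => [|a w IH] /=.
  by rewrite /winv /= -{1}(gmulV (gone H)) gmulr1.
rewrite /winv map_cons rev_cons -cats1 eval_word_cat -/(winv w) IH /= gmulr1.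
rewrite ginvM /eval_letter /letter_inv /=.
by case: a.2 => //=; rewrite ginvK.
Qed.

Lemma eval_word_wcong y rels u v :
  (forall r, r \in rels -> eval_word y r = gone H) ->
  wcong rels u v -> eval_word y u = eval_word y v.
Proof.
move=> y_rels; elim=> //.
- by move=> ? ? ? _ -> _ ->.
- by move=> ? ? ? ? _ e1 _ e2; rewrite !eval_word_cat e1 e2.
- move=> a /=; rewrite gmulr1 /eval_letter /letter_inv /=.
  by case: a.2 => /=; rewrite ?gmulV ?gmulrV.
Qed.

(* The evaluation of [w] only multiplies elements of this list. *)
Fixpoint word_support (x : 'I_n -> H) w : seq H :=
  eval_word x w ::
    if w is a :: s then x a.1 :: ginv (x a.1) :: word_support x s else [::].

Lemma one_in_word_support x w : List.In (gone H) (word_support x w).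
Proof. by elim: w => [|a w IH] /=; [left | do 3 right]. Qed.

End Words.

Lemma hom_on_eval_word (G H : group) (S : G -> Prop) (f : G -> H) n
    (x : 'I_n -> G) (w : word n) :
  (forall u v, S u -> S v -> S (gmul u v) -> f (gmul u v) = gmul (f u) (f v)) ->
  (forall u, List.In u (word_support x w) -> S u) ->
  f (eval_word x w) = eval_word (f \o x) w.
Proof.
move=> f_mul_on; have S1 := one_in_word_support x.
elim: w => [|a w IH] /= Sw; first by apply: (hom_on_one f_mul_on); apply: Sw; left.
have [Sa Sa'] : S (x a.1) /\ S (ginv (x a.1)) by split; apply: Sw; [right; left | do 2 right; left].
have Sl : S (eval_letter x a) by rewrite /eval_letter; case: a.2.
rewrite f_mul_on //; last by apply: Sw; left.
- rewrite IH; last by move=> u Su; apply: Sw; do 3 right.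
  congr gmul; rewrite /eval_letter /=; case: a.2 => //.
  by apply: (hom_on_inv f_mul_on) => //; apply: Sw; do 3 right; apply: S1.
- by apply: Sw; do 3 right; case: (w) => /=; left.
Qed.

Section FinitePresentation.
Variables (G : group) (n : nat) (gens : 'I_n -> G) (rels : seq (word n)).
Hypothesis gens_ker : forall w, eval_word gens w = gone G <-> wcong rels w [::].
Variable (wd : G -> word n).
Hypothesis wdK : forall g, eval_word gens (wd g) = g.
Variables (H : group) (y : 'I_n -> H).
Hypothesis y_rels : forall r, r \in rels -> eval_word y r = gone H.

Lemma eval_word_factor u v :
  eval_word gens u = eval_word gens v -> eval_word y u = eval_word y v.
Proof.
move=> e; apply: gmulV_eq1; rewrite -eval_word_winv -eval_word_cat.
apply: (eval_word_wcong y_rels (v := [::])); apply/gens_ker.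
by rewrite eval_word_cat eval_word_winv e gmulrV.
Qed.

Lemma presentation_hom : is_hom (fun g => eval_word y (wd g)).
Proof.
move=> g h; rewrite -eval_word_cat; apply: eval_word_factor.
by rewrite eval_word_cat !wdK.
Qed.

End FinitePresentation.

Lemma mem_In (T : eqType) (x : T) (s : seq T) : x \in s -> List.In x s.
Proof. by elim: s => //= y s IH; rewrite inE => /orP[/eqP ->|/IH]; [left | right]. Qed.

Lemma almost_hom_restrict (R : realType) (X Y : pngroup R) (D D' : seq (pgrp X))
    Q (f f' : pgrp X -> pgrp Y) :
  (forall g, List.In g D -> List.In g D') ->
  (forall g, List.In g D -> f' g = f g) ->
  almost_hom D' Q f -> almost_hom D Q f'.
Proof.
move=> sDD' ff' [f_inj [f_mul f_norm]]; split; [|split].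
- by move=> g h Dg Dh; rewrite !ff' // => /f_inj; apply; apply: sDD'.
- by move=> h g Dh Dg Dhg; rewrite !ff' //; apply: f_mul; apply: sDD'.
- by move=> g q Dg Qq; rewrite ff' //; apply: f_norm => //; apply: sDD'.
Qed.

Theorem corollary5p6 (R : realType) (Lam : set R) (C : pngroup R -> Prop)
  (G : pngroup R) :
  good_Lambda Lam ->
  (forall X, C X -> inv_pseudo_norm Lam X) ->
  closed_subgroups C ->
  closed_iso C ->
  finitely_presented (pgrp G) ->
  inv_pseudo_norm Lam G ->
  metrically_LE Lam C G ->
  fully_residually Lam C G.
Proof.
move=> _ _ _ _ [n [gens [rels [gens_onto gens_ker]]]] _ G_LE D Q admQ.
have [wd wdK] : {wd : pgrp G -> word n | forall g, eval_word gens (wd g) = g}.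
  by exists (fun g => projT1 (cid (gens_onto g))) => g; case: cid.
pose W := (rels ++ map wd D)%list.
pose D' := (D ++ List.flat_map (word_support gens) W)%list.
have [X [f [CX f_almost]]] := G_LE D' Q admQ.
have sDD' g : List.In g D -> List.In g D' by move=> Dg; apply/List.in_app_iff; left.
have supp_D' w u : List.In w W -> List.In u (word_support gens w) -> List.In u D'.
  by move=> Ww Su; apply/List.in_app_iff; right; apply/List.in_flat_map; exists w.
have f_mul_on := proj1 (proj2 f_almost).
have f_words w : List.In w W -> f (eval_word gens w) = eval_word (f \o gens) w.
  by move=> Ww; apply: (hom_on_eval_word f_mul_on) => u; apply: supp_D'.
have f_rels r : r \in rels -> eval_word (f \o gens) r = gone (pgrp X).
  move=> r_rels; have Wr : List.In r W by apply/List.in_app_iff; left; exact: mem_In.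
  rewrite -f_words // (proj2 (gens_ker r) (wc_rel r_rels)).
  exact/(hom_on_one f_mul_on)/(supp_D' r)/one_in_word_support.
exists X, (fun g => eval_word (f \o gens) (wd g)); split => //; split.
  by apply: (presentation_hom gens_ker wdK f_rels).
apply: almost_hom_restrict f_almost => // g Dg.
rewrite -f_words ?wdK //; apply/List.in_app_iff; right; exact: List.in_map.
Qed.
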